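(* Let $\langle B,\wedge,{}'\rangle$ be an algebra with $\wedge$ binary and ${}'$ unary satisfying $x\wedge(y\wedge z)\approx z\wedge(y\wedge x)$, $x''\approx x$, and $x'\approx (x\wedge y)'\wedge(x\wedge y')'$. Then $x'\wedge y'=y'\wedge x'$ for all $x,y\in B$. *)

(* Meet is in fact commutative on all of B.  Splitting x along x'y' and y
   along x'x' gives x = pq = qp and y = ps with the common factor
   p = (x'(x'y'))' = (y'(x'x'))'.  For all x, y some t satisfies
   xt = tx = xy, and with it the swap law yields (xy)(xz) = (xz)(yx); hence
   xy = (pq)(ps) = (ps)(qp) = yx. *)
From Stdlib Require Import Setoid.

Section SwapInvolutionAlgebra.

Variables (B : Type) (meet : B -> B -> B) (c : B -> B).

Hypothesis meet_swap : forall x y z : B, meet x (meet y z) = meet z (meet y x).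
Hypothesis c_invol : forall x : B, c (c x) = x.
Hypothesis c_split : forall x y : B, c x = meet (c (meet x y)) (c (meet x (c y))).

Lemma c_split_swap (x y : B) : c x = meet (c (meet x (c y))) (c (meet x y)).
Proof.
  rewrite (c_split x (c y)), c_invol.
  reflexivity.
Qed.

Lemma meet_split (x y : B) : x = meet (c (meet (c x) y)) (c (meet (c x) (c y))).
Proof. rewrite <- c_split. symmetry. apply c_invol. Qed.

Lemma meet_split_swap (x y : B) : x = meet (c (meet (c x) (c y))) (c (meet (c x) y)).
Proof. rewrite <- c_split_swap. symmetry. apply c_invol. Qed.

(* With [X := (xy)'] and [Y := x y'] the axiom reads [x = (X Y')'], so
   splitting [xy = X'] over [Y] yields [(XY)' x = x (XY)' = xy]. *)
Definition partner (x y : B) : B := c (meet (c (meet x y)) (meet x (c y))).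

Lemma meet_partner_l (x y : B) : meet (partner x y) x = meet x y.
Proof.
  unfold partner.
  rewrite <- (c_invol (meet x y)) at 2.
  rewrite (c_split (c (meet x y)) (meet x (c y))), <- (c_split x y), c_invol.
  reflexivity.
Qed.

Lemma meet_partner_r (x y : B) : meet x (partner x y) = meet x y.
Proof.
  unfold partner.
  rewrite <- (c_invol (meet x y)) at 2.
  rewrite (c_split_swap (c (meet x y)) (meet x (c y))), <- (c_split x y), c_invol.
  reflexivity.
Qed.

Lemma meet_meetA (x y z : B) : meet (meet x y) (meet x z) = meet x (meet y (meet x z)).
Proof.
  rewrite <- (meet_partner_l x z) at 1.
  rewrite meet_swap, (meet_swap (partner x z)), meet_partner_r.
  reflexivity.
Qed.

Lemma meet_meet_comm (x y z : B) :
  meet (meet x y) (meet x z) = meet (meet x z) (meet y x).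
Proof. rewrite meet_meetA. apply meet_swap. Qed.

Lemma meetC (x y : B) : meet x y = meet y x.
Proof.
  set (p := c (meet (c x) (meet (c x) (c y)))).
  assert (Hx : x = meet p (c (meet (c x) (c (meet (c x) (c y)))))).
  { apply meet_split. }
  assert (Hx' : x = meet (c (meet (c x) (c (meet (c x) (c y))))) p).
  { apply meet_split_swap. }
  assert (Hy : y = meet p (c (meet (c y) (c (meet (c x) (c x)))))).
  { unfold p. rewrite meet_swap. apply meet_split. }
  rewrite Hy, Hx at 1.
  rewrite meet_meet_comm, <- Hx', <- Hy.
  reflexivity.
Qed.

End SwapInvolutionAlgebra.

Theorem lemma7p6 (B : Type) (meet : B -> B -> B) (c : B -> B)
  (Hassoc : forall x y z : B, meet x (meet y z) = meet z (meet y x))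
  (Hinv : forall x : B, c (c x) = x)
  (Hsplit : forall x y : B, c x = meet (c (meet x y)) (c (meet x (c y)))) :
  forall x y : B, meet (c x) (c y) = meet (c y) (c x).
Proof.
  intros x y.
  exact (meetC B meet c Hassoc Hinv Hsplit (c x) (c y)).
Qed.
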